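(* Let $j_1,\dots,j_6$ be non-negative half-integers (elements of $\tfrac12\mathbb Z_{\ge0}$) such that $j_1=j_5+j_6\ge 3$, $j_2=j_3$, and such that each of the four triples $$(h,j_2,j_3),\ (h,j_5,j_6),\ (j_4,j_2,j_6),\ (j_4,j_5,j_3)$$ satisfies the triangle condition both for $h=j_1$ and for $h=j_1-1$. If $\left\{\begin{matrix} j_1-1 & j_2 & j_3\\ j_4 & j_5 & j_6\end{matrix}\right\}=0$, then $\left\{\begin{matrix} j_1-2 & j_2 & j_3\\ j_4 & j_5 & j_6\end{matrix}\right\}\ne0$ and $\left\{\begin{matrix} j_1-3 & j_2 & j_3\\ j_4 & j_5 & j_6\end{matrix}\right\}\ne0$. In particular the four triples above satisfy the triangle condition also for $h=j_1-2$ and $h=j_1-3$.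
   Context: Three half-integers $j_1,j_2,j_3$ satisfy the triangle condition if $j_1+j_2+j_3\in\mathbb Z$ and $|j_1-j_2|\le j_3\le j_1+j_2$ (in particular all are non-negative). $\left\{\begin{matrix} j_1 & j_2 & j_3\\ j_4 & j_5 & j_6\end{matrix}\right\}$ denotes the Racah–Wigner $6j$-symbol of angular momentum theory (as in Varshalovich–Moskalev–Khersonskii, Quantum Theory of Angular Momentum, Ch. 9); it is a real number, defined to be $0$ unless all four triples $(j_1,j_2,j_3),(j_1,j_5,j_6),(j_4,j_2,j_6),(j_4,j_5,j_3)$ satisfy the triangle condition. *)

From Stdlib Require Import Reals Arith List Bool.
Open Scope R_scope.
Local Open Scope bool_scope.

(* CONVENTION: a non-negative half-integer j is represented by the natural
   number J = 2j.  All arguments below are these doubled values. *)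

(* Triangle condition for (j1,j2,j3) given doubled values a=2j1, b=2j2, c=2j3:
   j1+j2+j3 integer (a+b+c even) and |j1-j2| <= j3 <= j1+j2
   (the latter unfolds to a <= b+c, b <= a+c, c <= a+b). *)
Definition trib (a b c : nat) : bool :=
  Nat.even (a + b + c) && Nat.leb a (b + c) && Nat.leb b (a + c)
  && Nat.leb c (a + b).

Definition tri (a b c : nat) : Prop := trib a b c = true.

Definition factR (n : nat) : R := INR (fact n).

Definition Delta (a b c : nat) : R :=
  sqrt (factR ((a + b - c) / 2)%nat * factR ((a + c - b) / 2)%nat
        * factR ((b + c - a) / 2)%nat / factR ((a + b + c) / 2 + 1)%nat).

(* Racah sum (Varshalovich et al., Ch. 9, eq. 9.2.1):
   sum_t (-1)^t (t+1)! / [(t-a-b-c)!(t-a-e-f)!(t-d-b-f)!(t-d-e-c)!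
                           (a+b+d+e-t)!(a+c+d+f-t)!(b+c+e+f-t)!],
   t ranging over the integers for which all factorial arguments are >= 0. *)
Definition racah_sum (a b c d e f : nat) : R :=
  let al1 := ((a + b + c) / 2)%nat in
  let al2 := ((a + e + f) / 2)%nat in
  let al3 := ((d + b + f) / 2)%nat in
  let al4 := ((d + e + c) / 2)%nat in
  let be1 := ((a + b + d + e) / 2)%nat in
  let be2 := ((a + c + d + f) / 2)%nat in
  let be3 := ((b + c + e + f) / 2)%nat in
  fold_right Rplus 0
    (map (fun t : nat =>
       if Nat.leb al1 t && Nat.leb al2 t && Nat.leb al3 t && Nat.leb al4 t
          && Nat.leb t be1 && Nat.leb t be2 && Nat.leb t be3
       then (-1) ^ t * factR (t + 1)%nat
            / (factR (t - al1)%nat * factR (t - al2)%nat * factR (t - al3)%nat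
               * factR (t - al4)%nat * factR (be1 - t)%nat * factR (be2 - t)%nat
               * factR (be3 - t)%nat)
       else 0)
     (seq 0 (S be1))).

Definition sixj (a b c d e f : nat) : R :=
  if trib a b c && trib a e f && trib d b f && trib d e c
  then Delta a b c * Delta a e f * Delta d b f * Delta d e c
       * racah_sum a b c d e f
  else 0.

From Pilot Require Import Defs.
From Stdlib Require Import Reals Arith Lia Lra ZArith List Bool.
Open Scope R_scope.

(* In doubled values J_i = 2 j_i write J1 = 2m, J2 = J3 = x + m, J4 = x + u + v,
   J5 = u + B, J6 = v + C with B + v = C + u = m.  For h = j1 - k the Racah sum then has
   only k + 1 terms, and after clearing a non-zero factor it becomes a
   polynomial P_k in x, B, u, v.  One finds P_1 = m ((x+1)(B-u) - 2uv), so the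
   hypothesis is the relation (x+1)(B-u) = 2uv; it forces u, v >= 1 and u < B.
   On this locus P_2 is -2uv times a sum of positive terms and
   P_3 = 3 (2m-3)(2m-4) P_2, so both are negative. *)

Fixpoint falling (r : R) (j : nat) : R :=
  match j with O => 1 | S j' => falling r j' * (r - INR j') end.

Fixpoint rising (r : R) (j : nat) : R :=
  match j with O => 1 | S j' => rising r j' * (r + INR j') end.

Lemma factR_pos n : 0 < factR n.
Proof. apply lt_0_INR, lt_O_fact. Qed.

Lemma factR_neq0 n : factR n <> 0.
Proof. apply Rgt_not_eq, factR_pos. Qed.

Lemma factR_add_rising n s : factR (n + s + 1) = factR (n + 1) * rising (INR n + 2) s.
Proof.
  induction s as [|s IHs]; simpl rising.
  - rewrite Nat.add_0_r. ring.
  - replace (n + S s + 1)%nat with (S (n + s + 1)) by lia.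
    unfold factR in *. rewrite fact_simpl, mult_INR, IHs, S_INR, !plus_INR. simpl. ring.
Qed.

(* [1/z!] extended by 0 to negative integers, so that it satisfies
   1/(z-1)! = z * (1/z!) everywhere. *)
Definition inv_factZ (z : Z) : R :=
  if (z <? 0)%Z then 0 else / factR (Z.to_nat z).

Lemma inv_factZ_nat n : inv_factZ (Z.of_nat n) = / factR n.
Proof.
  unfold inv_factZ. destruct (Z.ltb_spec (Z.of_nat n) 0); [lia|].
  rewrite Nat2Z.id. reflexivity.
Qed.

Lemma inv_factZ_neg z : (z < 0)%Z -> inv_factZ z = 0.
Proof. intros. unfold inv_factZ. destruct (Z.ltb_spec z 0); [reflexivity | lia]. Qed.

Lemma inv_factZ_pred z : inv_factZ (z - 1) = IZR z * inv_factZ z.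
Proof.
  destruct (Z.ltb_spec z 0) as [Hz|Hz].
  - rewrite !inv_factZ_neg by lia. ring.
  - destruct (Z_of_nat_complete z Hz) as [[|n] ->].
    + rewrite inv_factZ_neg by lia. simpl. ring.
    + replace (Z.of_nat (S n) - 1)%Z with (Z.of_nat n) by lia.
      rewrite !inv_factZ_nat, <- INR_IZR_INZ.
      unfold factR. rewrite fact_simpl, mult_INR.
      field. split; [apply not_0_INR, fact_neq_0 | apply not_0_INR; lia].
Qed.

Lemma inv_factZ_sub z j : inv_factZ (z - Z.of_nat j) = falling (IZR z) j * inv_factZ z.
Proof.
  induction j as [|j IHj]; simpl falling.
  - rewrite Z.sub_0_r. ring.
  - replace (z - Z.of_nat (S j))%Z with (z - Z.of_nat j - 1)%Z by lia.
    rewrite inv_factZ_pred, IHj, minus_IZR, <- INR_IZR_INZ. ring.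
Qed.

Lemma inv_factZ_sub_nat a b : (b <= a)%nat -> inv_factZ (Z.of_nat a - Z.of_nat b) = / factR (a - b).
Proof. intros. rewrite <- Nat2Z.inj_sub by lia. apply inv_factZ_nat. Qed.

Definition sumR (l : list R) : R := fold_right Rplus 0 l.

Lemma sumR_app l1 l2 : sumR (l1 ++ l2) = sumR l1 + sumR l2.
Proof. unfold sumR. rewrite fold_right_app. induction l1; simpl; [ring | lra]. Qed.

Lemma sumR_scale c (f : nat -> R) l : sumR (map (fun s => c * f s) l) = c * sumR (map f l).
Proof. induction l; unfold sumR in *; simpl; [ring | rewrite IHl; ring]. Qed.

Lemma sumR_shift (g : nat -> R) n L :
  sumR (map g (seq n L)) = sumR (map (fun s => g (n + s)%nat) (seq 0 L)).
Proof.
  rewrite <- (Nat.add_0_r n) at 1. generalize 0%nat.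
  induction L as [|L IHL]; intros m; [reflexivity|].
  unfold sumR in *. simpl. f_equal.
  replace (S (n + m)) with (n + S m)%nat by lia. apply IHL.
Qed.

Lemma sumR_seq_vanish (g : nat -> R) a d :
  (forall t, (a <= t < a + d)%nat -> g t = 0) -> sumR (map g (seq a d)) = 0.
Proof.
  revert a. induction d as [|d IHd]; intros a Hg; [reflexivity|].
  unfold sumR in *. simpl. rewrite Hg by lia. rewrite IHd by (intros; apply Hg; lia). ring.
Qed.

Lemma sumR_seq_extend (g : nat -> R) d e :
  (forall t, (d <= t)%nat -> g t = 0) -> (d <= e)%nat ->
  sumR (map g (seq 0 e)) = sumR (map g (seq 0 d)).
Proof.
  intros Hg Hde. replace e with (d + (e - d))%nat by lia.
  rewrite seq_app, map_app, sumR_app, (sumR_seq_vanish g (0 + d)) by (intros; apply Hg; lia).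
  ring.
Qed.

Lemma sumR_seq_window (g : nat -> R) M n k :
  (forall t, (t < n \/ n + k < t \/ M < t)%nat -> g t = 0) ->
  sumR (map g (seq 0 (S M))) = sumR (map g (seq n (S k))).
Proof.
  intros Hg. set (P := Nat.max (S M) (n + S k)).
  rewrite <- (sumR_seq_extend g (S M) P), (sumR_seq_extend g (n + S k) P)
    by (intros; apply Hg; lia) || (unfold P; lia).
  rewrite seq_app, map_app, sumR_app, (sumR_seq_vanish g 0 n) by (intros; apply Hg; lia).
  simpl. ring.
Qed.

Definition racah_summand (al1 al2 al3 al4 be1 be2 be3 : nat) (t : nat) : R :=
  if Nat.leb al1 t && Nat.leb al2 t && Nat.leb al3 t && Nat.leb al4 t
     && Nat.leb t be1 && Nat.leb t be2 && Nat.leb t be3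
  then (-1) ^ t * factR (t + 1)%nat
       / (factR (t - al1)%nat * factR (t - al2)%nat * factR (t - al3)%nat
          * factR (t - al4)%nat * factR (be1 - t)%nat * factR (be2 - t)%nat
          * factR (be3 - t)%nat)
  else 0.

Lemma racah_sum_summands a b c d e f : racah_sum a b c d e f =
  sumR (map (racah_summand ((a + b + c) / 2) ((a + e + f) / 2) ((d + b + f) / 2)
     ((d + e + c) / 2) ((a + b + d + e) / 2) ((a + c + d + f) / 2) ((b + c + e + f) / 2))
     (seq 0 (S ((a + b + d + e) / 2)))).
Proof. reflexivity. Qed.

Lemma racah_summand_inv_factZ al1 al2 al3 al4 be1 be2 be3 t :
  racah_summand al1 al2 al3 al4 be1 be2 be3 t =
  (-1) ^ t * factR (t + 1)
  * inv_factZ (Z.of_nat t - Z.of_nat al1) * inv_factZ (Z.of_nat t - Z.of_nat al2)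
  * inv_factZ (Z.of_nat t - Z.of_nat al3) * inv_factZ (Z.of_nat t - Z.of_nat al4)
  * inv_factZ (Z.of_nat be1 - Z.of_nat t) * inv_factZ (Z.of_nat be2 - Z.of_nat t)
  * inv_factZ (Z.of_nat be3 - Z.of_nat t).
Proof.
  unfold racah_summand.
  repeat match goal with
  | |- context [Nat.leb ?p ?q] =>
      destruct (Nat.leb_spec p q);
      [| rewrite (inv_factZ_neg (Z.of_nat q - Z.of_nat p)) by lia; simpl; ring]
  end.
  simpl. rewrite !inv_factZ_sub_nat by lia.
  field. repeat split; apply factR_neq0.
Qed.

Lemma racah_summand_outside al1 al2 al3 al4 be1 be2 be3 t :
  (t < al1 \/ be3 < t \/ be1 < t)%nat -> racah_summand al1 al2 al3 al4 be1 be2 be3 t = 0.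
Proof.
  intros H. unfold racah_summand.
  destruct (Nat.leb_spec al1 t), (Nat.leb_spec t be1), (Nat.leb_spec t be3);
    simpl; rewrite ?andb_false_r; reflexivity || lia.
Qed.

(* The summand t = N + s of the Racah sum for h = j1 - k, divided by a factor
   independent of s. *)
Definition racah_term (X B C U V N : R) (k s : nat) : R :=
  (-1) ^ s * rising (N + 2) s * falling (INR k) (k - s) * falling (INR k) s
  * falling (X + INR k) (k - s) * falling B (k - s) * falling C (k - s)
  * falling U s * falling V s.

Definition racah_poly (k : nat) (X B U V : R) : R :=
  sumR (map (racah_term X B (B + V - U) U V (X + 2 * (B + V) - INR k) k) (seq 0 (S k))).

(* Each inverse factorial 1/(c - j)! is written as falling c j / c!, which also
   covers the vanishing terms c < j. *)
Lemma racah_summand_stretched al1 al2 al3 al4 be1 be2 be3 x B C u v k n s :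
  al1 = n -> (al2 + x = n)%nat -> (al3 + B = n + k)%nat -> (al4 + C = n + k)%nat ->
  be1 = (n + u)%nat -> be2 = (n + v)%nat -> be3 = (n + k)%nat -> (s <= k)%nat ->
  racah_summand al1 al2 al3 al4 be1 be2 be3 (n + s) =
  (-1) ^ n * factR (n + 1)
  / (factR k * factR k * factR (x + k) * factR B * factR C * factR u * factR v)
  * racah_term (INR x) (INR B) (INR C) (INR u) (INR v) (INR n) k s.
Proof.
  intros -> H2 H3 H4 -> -> -> Hs. rewrite racah_summand_inv_factZ.
  set (j := (k - s)%nat).
  replace (Z.of_nat (n + s) - Z.of_nat n)%Z with (Z.of_nat k - Z.of_nat j)%Z by lia.
  replace (Z.of_nat (n + s) - Z.of_nat al2)%Z with (Z.of_nat (x + k) - Z.of_nat j)%Z by lia.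
  replace (Z.of_nat (n + s) - Z.of_nat al3)%Z with (Z.of_nat B - Z.of_nat j)%Z by lia.
  replace (Z.of_nat (n + s) - Z.of_nat al4)%Z with (Z.of_nat C - Z.of_nat j)%Z by lia.
  replace (Z.of_nat (n + u) - Z.of_nat (n + s))%Z with (Z.of_nat u - Z.of_nat s)%Z by lia.
  replace (Z.of_nat (n + v) - Z.of_nat (n + s))%Z with (Z.of_nat v - Z.of_nat s)%Z by lia.
  replace (Z.of_nat (n + k) - Z.of_nat (n + s))%Z with (Z.of_nat k - Z.of_nat s)%Z by lia.
  rewrite !inv_factZ_sub, !inv_factZ_nat, <- !INR_IZR_INZ, factR_add_rising, pow_add.
  unfold racah_term. rewrite plus_INR. fold j.
  field. repeat split; apply factR_neq0.
Qed.

Lemma div2_double a q : a = (2 * q)%nat -> (a / 2)%nat = q.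
Proof. intros ->. rewrite Nat.mul_comm. apply Nat.div_mul. lia. Qed.

Lemma racah_sum_stretched x B C u v k :
  (B + v = C + u)%nat -> (k <= B + v)%nat ->
  racah_sum (2 * (B + v) - 2 * k) (x + B + v) (x + B + v) (x + u + v) (u + B) (v + C) =
  (-1) ^ (x + 2 * (B + v) - k) * factR (x + 2 * (B + v) - k + 1)
  / (factR k * factR k * factR (x + k) * factR B * factR C * factR u * factR v)
  * racah_poly k (INR x) (INR B) (INR u) (INR v).
Proof.
  intros Hm Hk. set (n := (x + 2 * (B + v) - k)%nat).
  rewrite racah_sum_summands.
  rewrite (div2_double (2 * (B + v) - 2 * k + (x + B + v) + (x + B + v)) n),
    (div2_double (2 * (B + v) - 2 * k + (u + B) + (v + C)) (n - x)),
    (div2_double (x + u + v + (x + B + v) + (v + C)) (n + k - B)),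
    (div2_double (x + u + v + (u + B) + (x + B + v)) (n + k - C)),
    (div2_double (2 * (B + v) - 2 * k + (x + B + v) + (x + u + v) + (u + B)) (n + u)),
    (div2_double (2 * (B + v) - 2 * k + (x + B + v) + (x + u + v) + (v + C)) (n + v)),
    (div2_double (x + B + v + (x + B + v) + (u + B) + (v + C)) (n + k)) by (unfold n; lia).
  rewrite (sumR_seq_window _ (n + u) n k)
    by (intros; apply racah_summand_outside; lia).
  unfold racah_poly. rewrite sumR_shift, <- sumR_scale.
  assert (HC : INR C = INR B + INR v - INR u).
  { apply (f_equal INR) in Hm. rewrite !plus_INR in Hm. lra. }
  assert (Hn : INR n = INR x + 2 * (INR B + INR v) - INR k).
  { unfold n. rewrite minus_INR by lia. rewrite !plus_INR, mult_INR, plus_INR. simpl. ring. }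
  rewrite <- HC, <- Hn.
  apply f_equal, map_ext_in. intros s Hs. apply in_seq in Hs.
  apply racah_summand_stretched; unfold n in *; lia.
Qed.

Lemma racah_poly_1 X B U V :
  racah_poly 1 X B U V = (B + V) * ((X + 1) * (B - U) - 2 * U * V).
Proof. unfold racah_poly, sumR, racah_term; simpl. ring. Qed.

Lemma racah_poly_2 X B U V : B <> U -> (X + 1) * (B - U) = 2 * U * V ->
  racah_poly 2 X B U V =
  - 2 * U * V * ((2 * (B + V) - 2) * B * (B + V - U)
     + (X + 2) * (X + 2 * (B + V) + 1) * (2 * B + V - U - 1)
     + (X + 2 * (B + V)) * (X + 2 * (B + V) + 1) * (U + V - 1)).
Proof.
  intros HBU HS. assert (HBU' : B - U <> 0) by (intro; apply HBU; lra).
  replace X with (2 * U * V / (B - U) - 1) by (field_simplify_eq; lra).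
  unfold racah_poly, sumR, racah_term; simpl. field. exact HBU'.
Qed.

Lemma racah_poly_3 X B U V : B <> U -> (X + 1) * (B - U) = 2 * U * V ->
  racah_poly 3 X B U V = 3 * (2 * (B + V) - 3) * (2 * (B + V) - 4) * racah_poly 2 X B U V.
Proof.
  intros HBU HS. assert (HBU' : B - U <> 0) by (intro; apply HBU; lra).
  replace X with (2 * U * V / (B - U) - 1) by (field_simplify_eq; lra).
  unfold racah_poly, sumR, racah_term; simpl. field. exact HBU'.
Qed.

Lemma racah_poly_2_neg X B U V : 0 <= X -> 1 <= U -> 1 <= V -> U < B ->
  (X + 1) * (B - U) = 2 * U * V -> racah_poly 2 X B U V < 0.
Proof.
  intros HX HU HV HUB HS. rewrite racah_poly_2 by lra.
  assert (0 < (2 * (B + V) - 2) * B * (B + V - U)) by (repeat apply Rmult_lt_0_compat; lra).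
  assert (0 < (X + 2) * (X + 2 * (B + V) + 1) * (2 * B + V - U - 1))
    by (repeat apply Rmult_lt_0_compat; lra).
  assert (0 < (X + 2 * (B + V)) * (X + 2 * (B + V) + 1) * (U + V - 1))
    by (repeat apply Rmult_lt_0_compat; lra).
  assert (0 < U * V) by (apply Rmult_lt_0_compat; lra).
  nra.
Qed.

Lemma racah_poly_3_neg X B U V : 0 <= X -> 1 <= U -> 1 <= V -> U < B ->
  (X + 1) * (B - U) = 2 * U * V -> racah_poly 3 X B U V < 0.
Proof.
  intros HX HU HV HUB HS. rewrite racah_poly_3 by lra.
  pose proof (racah_poly_2_neg X B U V HX HU HV HUB HS).
  assert (0 < 3 * (2 * (B + V) - 3) * (2 * (B + V) - 4))
    by (repeat apply Rmult_lt_0_compat; lra).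
  nra.
Qed.

Lemma tri_spec a b c : tri a b c <->
  (exists q, a + b + c = 2 * q)%nat /\ (a <= b + c)%nat /\ (b <= a + c)%nat /\ (c <= a + b)%nat.
Proof.
  unfold tri, trib. rewrite !andb_true_iff, Nat.even_spec, !Nat.leb_le.
  unfold Nat.Even. tauto.
Qed.

Lemma Delta_pos a b c : 0 < Defs.Delta a b c.
Proof.
  apply sqrt_lt_R0. unfold Rdiv.
  repeat apply Rmult_lt_0_compat; try apply factR_pos. apply Rinv_0_lt_compat, factR_pos.
Qed.

Lemma Rmult_eq0_iff_r c r : c <> 0 -> c * r = 0 <-> r = 0.
Proof.
  intros Hc. split; [| intros ->; ring].
  intros H. apply Rmult_integral in H as [H|H]; [contradiction | exact H].
Qed.

Lemma sixj_eq0_iff a b c d e f : tri a b c -> tri a e f -> tri d b f -> tri d e c ->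
  sixj a b c d e f = 0 <-> racah_sum a b c d e f = 0.
Proof.
  unfold tri, sixj. intros -> -> -> ->. simpl.
  apply Rmult_eq0_iff_r.
  repeat apply Rmult_integral_contrapositive_currified; apply Rgt_not_eq, Delta_pos.
Qed.

Lemma sixj_stretched_eq0_iff x B C u v k : (B + v = C + u)%nat -> (k <= B + v)%nat ->
  let h := (2 * (B + v) - 2 * k)%nat in
  tri h (x + B + v) (x + B + v) -> tri h (u + B) (v + C) ->
  tri (x + u + v) (x + B + v) (v + C) -> tri (x + u + v) (u + B) (x + B + v) ->
  sixj h (x + B + v) (x + B + v) (x + u + v) (u + B) (v + C) = 0 <->
  racah_poly k (INR x) (INR B) (INR u) (INR v) = 0.
Proof.
  intros Hm Hk h T1 T2 T3 T4. subst h. rewrite sixj_eq0_iff, racah_sum_stretched by assumption.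
  apply Rmult_eq0_iff_r. unfold Rdiv.
  repeat apply Rmult_integral_contrapositive_currified;
    apply pow_nonzero || apply factR_neq0 || apply Rinv_neq_0_compat; try lra.
  repeat apply Rmult_integral_contrapositive_currified; apply factR_neq0.
Qed.

Lemma stretched_parametrization J1 J2 J4 J5 J6 :
  J1 = (J5 + J6)%nat -> tri J1 J2 J2 -> tri J4 J2 J6 -> tri J4 J5 J2 ->
  exists x B C u v, (B + v = C + u)%nat /\ J1 = (2 * (B + v))%nat /\ J2 = (x + B + v)%nat
    /\ J4 = (x + u + v)%nat /\ J5 = (u + B)%nat /\ J6 = (v + C)%nat.
Proof.
  rewrite !tri_spec. intros HJ1 ([q1 ?] & ?) ([q2 ?] & ? & ? & ?) ([q3 ?] & ? & ? & ?).
  exists (2 * J2 - q1)%nat, (q3 - J4)%nat, (q2 - J4)%nat, (q3 - J2)%nat, (q2 - J2)%nat.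
  repeat split; lia.
Qed.

Lemma tri_stretched_lower x B C u v k : (B + v = C + u)%nat ->
  (k <= u + B)%nat -> (k <= v + C)%nat ->
  tri (2 * (B + v) - 2 * k) (x + B + v) (x + B + v)
  /\ tri (2 * (B + v) - 2 * k) (u + B) (v + C).
Proof.
  intros. rewrite !tri_spec. split; (split; [| lia]).
  - exists (2 * (B + v) + x - k)%nat. lia.
  - exists (2 * (B + v) - k)%nat. lia.
Qed.

Lemma racah_poly_1_eq0 x B C u v : (B + v = C + u)%nat ->
  (1 <= u + B)%nat -> (1 <= v + C)%nat -> racah_poly 1 (INR x) (INR B) (INR u) (INR v) = 0 ->
  (INR x + 1) * (INR B - INR u) = 2 * INR u * INR v /\ (1 <= u)%nat /\ (1 <= v)%nat /\ (u < B)%nat.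
Proof.
  intros Hm HuB HvC H. rewrite racah_poly_1 in H.
  assert (Hlocus : (INR x + 1) * (INR B - INR u) = 2 * INR u * INR v).
  { apply Rmult_integral in H as [H|H]; [| lra].
    rewrite <- plus_INR in H. apply (INR_eq _ 0) in H. lia. }
  assert (Hlocus_nat : ((x + 1) * B = (x + 1) * u + 2 * u * v)%nat).
  { apply INR_eq. rewrite !plus_INR, !mult_INR, !plus_INR. simpl. lra. }
  split; [exact Hlocus | nia].
Qed.

Theorem proposition2p3 (J1 J2 J3 J4 J5 J6 : nat) :
  J1 = (J5 + J6)%nat -> (6 <= J1)%nat -> J2 = J3 ->
  (forall H : nat, (H = J1 \/ H = J1 - 2)%nat ->
     tri H J2 J3 /\ tri H J5 J6 /\ tri J4 J2 J6 /\ tri J4 J5 J3) ->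
  sixj (J1 - 2) J2 J3 J4 J5 J6 = 0 ->
  sixj (J1 - 4) J2 J3 J4 J5 J6 <> 0 /\ sixj (J1 - 6) J2 J3 J4 J5 J6 <> 0 /\
  (forall H : nat, (H = J1 - 4 \/ H = J1 - 6)%nat ->
     tri H J2 J3 /\ tri H J5 J6 /\ tri J4 J2 J6 /\ tri J4 J5 J3).
Proof.
  intros HJ1 H6 <- Htri Hzero.
  destruct (Htri J1 (or_introl eq_refl)) as (T1 & _ & T3 & T4).
  destruct (Htri (J1 - 2)%nat (or_intror eq_refl)) as (T2 & T6 & _ & _).
  assert (HJ56 : (1 <= J5 /\ 1 <= J6)%nat) by (apply tri_spec in T6 as (_ & ? & ? & ?); lia).
  destruct (stretched_parametrization J1 J2 J4 J5 J6 HJ1 T1 T3 T4)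
    as (x & B & C & u & v & Hm & -> & -> & -> & -> & ->).
  replace (2 * (B + v) - 2)%nat with (2 * (B + v) - 2 * 1)%nat in * by lia.
  replace (2 * (B + v) - 4)%nat with (2 * (B + v) - 2 * 2)%nat by lia.
  replace (2 * (B + v) - 6)%nat with (2 * (B + v) - 2 * 3)%nat by lia.
  rewrite sixj_stretched_eq0_iff in Hzero by (auto || lia).
  destruct (racah_poly_1_eq0 x B C u v) as (Hlocus & Hu & Hv & HuB); try lia; auto.
  destruct (tri_stretched_lower x B C u v 2) as [T2a T2b]; try lia.
  destruct (tri_stretched_lower x B C u v 3) as [T3a T3b]; try lia.
  apply le_INR in Hu, Hv. apply lt_INR in HuB. pose proof (pos_INR x).
  split; [| split].
  - rewrite sixj_stretched_eq0_iff by (auto || lia).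
    apply Rlt_not_eq, racah_poly_2_neg; simpl in *; lra.
  - rewrite sixj_stretched_eq0_iff by (auto || lia).
    apply Rlt_not_eq, racah_poly_3_neg; simpl in *; lra.
  - intros h [-> | ->]; auto.
Qed.
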